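(* For every $f\in\mathrm{Sp}(1,\mathbb{R})=\mathrm{SL}(2,\mathbb{R})$, $s(f)=i^{-n(f)}$.
   Context: Let $V=\mathbb{R}^{2}$ with basis $p,q$ and symplectic form $\omega(p,q)=-\omega(q,p)=1$, $\omega(p,p)=\omega(q,q)=0$; $\mathrm{Sp}(1,\mathbb{R})$ is its isometry group; $\lambda_0=\mathrm{span}\{p\}$. A lagrangian is a subspace equal to its own $\omega$-orthogonal. Definition of $s$: for oriented lagrangians $\lambda_1,\lambda_2$ of a real symplectic space, let $\kappa=\lambda_1\cap\lambda_2$. If $\kappa=0$, $\epsilon(\lambda_1,\lambda_2)=\mathrm{sgn}\det(\omega(a_i,b_j))$ for positive bases $(a_i)$ of $\lambda_1$, $(b_j)$ of $\lambda_2$. If $\kappa\neq0$, orient $\kappa$ arbitrarily, orient $\lambda_i/\kappa$ so that a positive basis of $\kappa$ followed by lifts of a positive basis of $\lambda_i/\kappa$ is positive in $\lambda_i$, and set $\epsilon(\lambda_1,\lambda_2)=\epsilon(\lambda_1/\kappa,\lambda_2/\kappa)$ in $\kappa^\perp/\kappa$; if $\lambda_1=\lambda_2$, $\epsilon=1$ if orientations agree and $-1$ otherwise. Put $s(\lambda_1,\lambda_2)=i^{\dim\lambda_1-\dim\kappa}\epsilon(\lambda_1,\lambda_2)$, and $s(f)=s(\lambda_0,f(\lambda_0))$ with $\lambda_0$ arbitrarily oriented and $f(\lambda_0)$ given the image orientation. Definition of $n$: for $f\in\mathrm{Sp}(1,\mathbb{R})$, $\star_f$ is the nonsingular bilinear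 form on $(f-1)V$ with $a\star_f b=\omega(x,b)$ where $(f-1)x=a$; $\mathrm{sgn}[\det(\star_f)]\in\{\pm1\}$ is the sign of the determinant of its Gram matrix, with value $1$ when $f=\mathrm{Id}$; $\star_{f,\lambda_0}$ is its (symmetric) restriction to $\lambda_0\cap(f-1)V$. Then $n(f)=\mathrm{Signature}(\star_{f,\lambda_0})-\dim((f-1)V)-\mathrm{sgn}[\det(\star_f)]+1$. *)

From HB Require Import structures.
From mathcomp Require Import all_boot all_order all_algebra.
From mathcomp Require Import boolp reals complex.
Set Implicit Arguments. Unset Strict Implicit. Unset Printing Implicit Defensive.
Import Order.TTheory GRing.Theory Num.Theory.
Local Open Scope ring_scope.

(* V = R^2 as row vectors 'rV[R]_2; basis p = (1,0), q = (0,1).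
   A linear map f is represented by a matrix A acting on the right: v |-> v *m A. *)
Section Sp1.
Variable R : realType.

Definition vp : 'rV[R]_2 := \row_j (if j == 0 then 1 else 0).
Definition vq : 'rV[R]_2 := \row_j (if j == 0 then 0 else 1).

Definition omega (u v : 'rV[R]_2) : R := u 0 0 * v 0 1 - u 0 1 * v 0 0.

Definition symplectic (A : 'M[R]_2) : Prop :=
  forall u v : 'rV[R]_2, omega (u *m A) (v *m A) = omega u v.

Definition lambda0 : 'M[R]_(1, 2) := vp.

(* s(lambda1, lambda2) for oriented lagrangians of R^2 (lines), the oriented
   line lambda_i being given by a positively oriented basis vector a (resp. b). *)
Definition s_lag (a b : 'rV[R]_2) : R[i] :=
  let k := \rank (a :&: b)%MS in
  let eps : R :=
    if k == 0%N then (* kappa = 0: sign of det (omega(a_i, b_j)) (1x1 matrix) *)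
      (sgz (omega a b))%:~R
    else
      (if `[< exists2 c : R, 0 < c & b = c *: a >] then 1 else -1) in
  'i ^+ (1 - k) * (eps%:C)%C.

Definition s_of (A : 'M[R]_2) : R[i] := s_lag vp (vp *m A).

(* (f-1)V is the row space of A - 1. *)
Definition fm1 (A : 'M[R]_2) : 'M[R]_2 := A - 1%:M.

(* a *_f b = omega(x, b) where (f-1)x = a *)
Definition star (A : 'M[R]_2) (a b : 'rV[R]_2) : R :=
  omega (a *m pinvmx (fm1 A)) b.

Definition star_gram (A : 'M[R]_2) : 'M[R]_(\rank (fm1 A)) :=
  \matrix_(i, j) star A (row i (row_base (fm1 A))) (row j (row_base (fm1 A))).

(* sign of the determinant (the determinant of the empty Gram matrix is 1,
   so the value is 1 when f = Id, as required) *)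
Definition sgn_det_star (A : 'M[R]_2) : int := sgz (\det (star_gram A)).

Definition pos_index (b : 'rV[R]_2 -> 'rV[R]_2 -> R) (U : 'M[R]_2) : nat :=
  \max_(k < 3 | `[< exists S : 'M[R]_2, [/\ (S <= U)%MS, \rank S = k :> nat &
       forall v : 'rV[R]_2, (v <= S)%MS -> v != 0 -> 0 < b v v] >]) k.

Definition signature (b : 'rV[R]_2 -> 'rV[R]_2 -> R) (U : 'M[R]_2) : int :=
  (pos_index b U)%:Z - (pos_index (fun u v => - b u v) U)%:Z.

Definition n_of (A : 'M[R]_2) : int :=
  signature (star A) (lambda0 :&: fm1 A)%MS - (\rank (fm1 A))%:Z
  - sgn_det_star A + 1.

End Sp1.

From HB Require Import structures.
From mathcomp Require Import all_boot all_order all_algebra.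
From mathcomp Require Import boolp reals complex.
From mathcomp Require Import ring zify.

Set Implicit Arguments.
Unset Strict Implicit.
Unset Printing Implicit Defensive.
Import Order.TTheory GRing.Theory Num.Theory.
Local Open Scope ring_scope.

(* Write A = [[a, b], [c, d]], whose rows are f(p) and f(q); then ad - bc = 1, and f fixes
   lambda_0 iff b = 0.  Directly, s(f) = i sgn b if b <> 0 and s(f) = sgn a if b = 0.
   For n(f), the form *_f is computed on preimages: a *_f v = omega(x, v) whenever
   x (A - 1) = a, since vectors fixed by A are omega-orthogonal to the image of A - 1.
   If D = det (A - 1) = 2 - a - d is nonzero, *_f on lambda_0 has sign sgn (b / D) and its
   Gram determinant has sign sgn D; if D = 0, (A - 1)V is a line or zero and both terms
   reduce to one value of omega.  Comparing exponents of i modulo 4, using D a = -(a - 1)^2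
   when b = 0, gives s(f) = i^(-n(f)). *)

Lemma ord2P (j : 'I_2) : j = 0 \/ j = 1.
Proof. by case: j => [[|[|k]] Hk]; [left|right|]; try apply: val_inj. Qed.

Lemma expCi_eqmod4 (C : numClosedFieldType) (k m : int) :
  (k = m %[mod 4])%Z -> 'i ^ k = 'i ^ m :> C.
Proof.
have i4 : 'i ^ 4 = 1 :> C by rewrite -exprnP (exprM _ 2 2) sqrCi expr2 mulN1r opprK.
have i4q q : 'i ^ (q * 4) = 1 :> C by rewrite mulrC -exprz_exp i4 exp1rz.
move=> km; rewrite (divz_eq k 4) (divz_eq m 4) km.
by rewrite !expfzDr ?neq0Ci // !i4q !mul1r.
Qed.

Section TwoByTwo.
Variable F : fieldType.

Lemma mulmx2E m n (U : 'M[F]_(m, 2)) (V : 'M[F]_(2, n)) i j :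
  (U *m V) i j = U i 0 * V 0 j + U i 1 * V 1 j.
Proof.
by rewrite mxE !big_ord_recl big_ord0 addr0; congr (_ + U i _ * V _ j); apply: val_inj.
Qed.

Lemma det_mx22 (N : 'M[F]_2) : \det N = N 0 0 * N 1 1 - N 0 1 * N 1 0.
Proof.
rewrite (expand_det_row _ 0) !big_ord_recl big_ord0 addr0 /cofactor !det_mx11 !mxE /=.
have -> : lift 0 (0 : 'I_1) = 1 :> 'I_2 by apply: val_inj.
have -> : lift 1 (0 : 'I_1) = 0 :> 'I_2 by apply: val_inj.
rewrite /bump /= expr0 expr1; ring.
Qed.

Lemma mxrank2_singular (N : 'M[F]_2) : \det N = 0 -> N != 0 -> \rank N = 1%N.
Proof.
move=> detN0 N0; have rk_le2 := rank_leq_col N; rewrite -mxrank_eq0 in N0.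
have : \rank N != 2%N.
  apply/eqP => rk2; have : N \in unitmx by rewrite -row_free_unit /row_free rk2.
  by rewrite unitmxE unitfE detN0 eqxx.
by move: N0 rk_le2; lia.
Qed.

Lemma capmx_rV_rank0 n m (u : 'rV[F]_n) (V : 'M[F]_(m, n)) :
  ~~ (u <= V)%MS -> \rank (u :&: V)%MS = 0%N.
Proof.
move=> uV; have := mxrank_leqif_eq (capmxSl u V).
have -> : (u :&: V == u)%MS = false.
  by apply: contraNF uV => /andP[_ /submx_trans]; apply; apply: capmxSr.
by move/ltn_leqif; have := rank_leq_row u; lia.
Qed.

Lemma rank1_sub_rV n m (w : 'rV[F]_n) (V : 'M[F]_(m, n)) :
  \rank V = 1%N -> (w <= V)%MS -> w != 0 -> (V <= w)%MS.
Proof.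
move=> rkV wV w0; have := mxrank_leqif_eq wV.
case E: (w == V)%MS; first by case/andP: E.
by move/ltn_leqif; rewrite rkV rank_rV w0.
Qed.

End TwoByTwo.

Section Signature.
Variable R : realType.
Implicit Types (b : 'rV[R]_2 -> 'rV[R]_2 -> R) (U : 'M[R]_2).

Lemma sgzV (x : R) : sgz x^-1 = sgz x.
Proof. by rewrite -sgz_sgr sgrV sgz_sgr. Qed.

Lemma sgz_sqrM (x y : R) : x != 0 -> sgz (x ^+ 2 * y) = sgz y.
Proof. by move=> x0; rewrite sgzM gtr0_sgz ?mul1r // exprn_even_gt0. Qed.

Lemma sgz_pm1 (x : R) : x != 0 -> sgz x = 1 \/ sgz x = -1.
Proof.
move=> x0; have [x_gt0|x_lt0|x_eq0] := ltgtP 0 x.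
- by left; apply: gtr0_sgz.
- by right; apply: ltr0_sgz.
- by rewrite -x_eq0 eqxx in x0.
Qed.

Lemma signature_rank0 b U : \rank U = 0%N -> signature b U = 0.
Proof.
have pos_index0 b' : \rank U = 0%N -> pos_index b' U = 0%N.
  move=> rkU; apply/eqP; rewrite -leqn0; apply/bigmax_leqP => k /asboolP[S [SU <- _]].
  by have := mxrankS SU; rewrite rkU.
by move=> rkU; rewrite /signature !pos_index0.
Qed.

Section Line.
Variables (v : 'rV[R]_2) (U : 'M[R]_2).
Hypotheses (v0 : v != 0) (Uv : (U == v)%MS).

Lemma pos_index_line b : (forall t, b (t *: v) (t *: v) = t ^+ 2 * b v v) ->
  pos_index b U = (0 < b v v).
Proof.
move=> bZ; have rkU : \rank U = 1%N by rewrite (eqmx_rank Uv) rank_rV v0.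
have vU : (v <= U)%MS by case/andP: Uv.
apply/eqP; rewrite eqn_leq; apply/andP; split.
  apply/bigmax_leqP => k /asboolP[S [SU <- bS]].
  have := mxrank_leqif_eq SU; case E: (S == U)%MS.
    by move=> _; rewrite (eqmx_rank E) rkU (bS v (submx_trans vU (proj2 (andP E))) v0).
  by move/ltn_leqif; rewrite rkU; case: (\rank S).
have [bv_gt0|] := boolP (0 < b v v); last by [].
apply: (@leq_bigmax_cond _ _ (fun k : 'I_3 => nat_of_ord k) (1 : 'I_3)).
apply/asboolP; exists U; split=> [||u uU u0]; rewrite ?submx_refl ?rkU //.
have /sub_rVP[t ut] := submx_trans uU (proj1 (andP Uv)).
have t0 : t != 0 by apply: contraNneq u0 => t0; rewrite ut t0 scale0r.
by rewrite ut bZ mulr_gt0 // exprn_even_gt0.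
Qed.

Lemma signature_line b : (forall t, b (t *: v) (t *: v) = t ^+ 2 * b v v) ->
  signature b U = sgz (b v v).
Proof.
move=> bZ; rewrite /signature (pos_index_line bZ) (@pos_index_line (fun u w => - b u w)).
  2: by move=> t; rewrite bZ mulrN.
have [bv|bv|<-] := ltgtP 0 (b v v).
- by rewrite gtr0_sgz // oppr_gt0 ltNge (ltW bv).
- by rewrite ltr0_sgz // oppr_gt0 bv.
- by rewrite oppr0 ltxx sgz0.
Qed.

End Line.
End Signature.

Section Omega.
Variable R : realType.
Implicit Types (u v w : 'rV[R]_2) (t : R).

Lemma omegaBl u w v : omega (u - w) v = omega u v - omega w v.
Proof. by rewrite /omega !mxE; ring. Qed.

Lemma omegaBr u v w : omega u (v - w) = omega u v - omega u w.
Proof. by rewrite /omega !mxE; ring. Qed.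

Lemma omegaZl t u v : omega (t *: u) v = t * omega u v.
Proof. by rewrite /omega !mxE; ring. Qed.

Lemma omegaZr t u v : omega u (t *: v) = t * omega u v.
Proof. by rewrite /omega !mxE; ring. Qed.

End Omega.

Section Symplectic.
Variables (R : realType) (A : 'M[R]_2).
Hypothesis sympA : symplectic A.

Local Notation p := (vp R).
Local Notation q := (vq R).
Local Notation M := (fm1 A).
Local Notation a := (A 0 0).
Local Notation b := (A 0 1).
Local Notation c := (A 1 0).
Local Notation d := (A 1 1).

Lemma vpE j : p 0 j = (j == 0)%:R.
Proof. by rewrite mxE; case: (j == 0). Qed.

Lemma vp_neq0 : p != 0.
Proof. by apply/eqP => /rowP /(_ 0); rewrite vpE mxE /= => /eqP; rewrite oner_eq0. Qed.

Lemma vpM j : (p *m A) 0 j = A 0 j.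
Proof. by rewrite mulmx2E !vpE /= mul1r mul0r addr0. Qed.

Lemma fm1E i j : M i j = A i j - (i == j)%:R.
Proof. by rewrite !mxE. Qed.

Lemma det_symplectic : a * d - b * c = 1.
Proof.
have := sympA p q.
by rewrite /omega !mulmx2E !mxE /= !(mul1r, mul0r, add0r, addr0, subr0, mulr1).
Qed.

Lemma det_fm1 : \det M = 2 - a - d.
Proof.
rewrite det_mx22 !fm1E /=.
transitivity (a * d - b * c + 1 - a - d); first ring.
by rewrite det_symplectic; ring.
Qed.

Lemma det_fm1_stable : b = 0 -> \det M * a = - (a - 1) ^+ 2.
Proof.
move=> b0; rewrite det_fm1.
transitivity (- (a - 1) ^+ 2 - (a * d - b * c - 1) - b * c); first ring.
by rewrite det_symplectic b0 subrr subr0 mul0r subr0.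
Qed.

Lemma stable_a_neq0 : b = 0 -> a != 0.
Proof.
by move=> b0; apply: contra_eq_neq det_symplectic => ->; rewrite b0 !mul0r subr0 eq_sym oner_neq0.
Qed.

Lemma stable_vpM : b = 0 -> p *m A = a *: p.
Proof.
by move=> b0; apply/rowP => j; rewrite vpM mxE vpE; case: (ord2P j) => ->; rewrite /= ?mulr1 ?mulr0.
Qed.

Lemma rank_cap_lambda0 : \rank (p :&: p *m A)%MS = (b == 0) :> nat.
Proof.
have [b0|b0] := eqVneq b 0.
  rewrite stable_vpM // (capmx_idPl _) ?rank_rV ?vp_neq0 //.
  by rewrite (eqmx_scale _ (stable_a_neq0 b0)).
apply: capmx_rV_rank0; apply: contra b0 => /sub_rVP[t pt].
have := congr1 (fun u : 'rV[R]_2 => u 0 0) pt; have := congr1 (fun u : 'rV[R]_2 => u 0 1) pt.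
rewrite /= ![p 0 _]mxE ![(t *: _ : 'rV_2) 0 _]mxE !vpM /= => /esym/eqP.
rewrite mulf_eq0 => /orP[/eqP t0|//].
by rewrite t0 mul0r => /eqP; rewrite oner_eq0.
Qed.

Lemma s_ofE : s_of A = 'i ^ (if b != 0 then sgz b else 1 - sgz a).
Proof.
rewrite /s_of /s_lag rank_cap_lambda0; have [b0|b0] := eqVneq b 0 => /=.
  rewrite expr0 mul1r stable_vpM //.
  have [a_gt0|a_lt0|a0] := ltgtP 0 a; last by move: (stable_a_neq0 b0); rewrite -a0 eqxx.
    case: asboolP => [_|[]]; last by exists a.
    by rewrite gtr0_sgz // subrr.
  case: asboolP => [[t t_gt0 /rowP /(_ 0)]|_].
    by rewrite !mxE /= !mulr1 => ta; move: t_gt0; rewrite -ta ltNge ltW.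
  by rewrite ltr0_sgz // (_ : 1 - -1 = 2%:Z) // -exprnP sqrCi rmorphN1.
rewrite expr1 /omega !vpE vpM /= mul1r mul0r subr0 rmorph_int.
by case: (sgz_pm1 b0) => ->; rewrite ?mulr1 // mulrN1 exprN1 invCi.
Qed.

Lemma starE x u v : x *m M = u -> (v <= M)%MS -> star A u v = omega x v.
Proof.
move=> xu /submxP[z ->]; rewrite /star.
set y := u *m pinvmx M; have yu : y *m M = u by apply: mulmxKpV; rewrite -xu submxMl.
have yx_fixed : (y - x) *m A = y - x.
  by apply/eqP; rewrite -subr_eq0 -{2}[y - x]mulmx1 -mulmxBr mulmxBl yu xu subrr.
by apply/eqP; rewrite -subr_eq0 -omegaBl mulmxBr mulmx1 omegaBr -{1}yx_fixed sympA subrr.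
Qed.

Lemma starZ t u : star A (t *: u) (t *: u) = t ^+ 2 * star A u u.
Proof. by rewrite /star -scalemxAl omegaZl omegaZr mulrA. Qed.

Lemma signature_lambda0 x : x *m M = p ->
  signature (star A) (lambda0 R :&: M)%MS = sgz (omega x p).
Proof.
move=> xp; have pM : (p <= M)%MS by rewrite -xp submxMl.
rewrite (signature_line vp_neq0) ?(starE xp pM) //.
  by apply/eqmxP; apply/capmx_idPl.
by move=> t; rewrite starZ (starE xp pM).
Qed.

Lemma signature_lambda0_eq0 : ~~ (p <= M)%MS ->
  signature (star A) (lambda0 R :&: M)%MS = 0.
Proof. by move=> pM; rewrite signature_rank0 // capmx_rV_rank0. Qed.

Lemma sgn_det_star_id : M = 0 -> sgn_det_star A = 1.
Proof.
move=> M0; have rkM : \rank M = 0%N by rewrite M0 mxrank0.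
(* [star_gram A] is indexed by [\rank M]: generalizing the basis lets us rewrite the rank. *)
rewrite /sgn_det_star /star_gram; move: (row_base M).
by rewrite rkM => B; rewrite det_mx00 sgz1.
Qed.

Lemma sgn_det_star_rank1 x : \rank M = 1%N -> x *m M != 0 ->
  sgn_det_star A = sgz (omega x (x *m M)).
Proof.
move=> rkM w0; rewrite /sgn_det_star /star_gram.
move: (row_base M) (eq_row_base M) (row_base_free M); rewrite rkM => B eqB _.
have BM : (B <= M)%MS by rewrite eqB.
have B0 : B != 0 by rewrite -mxrank_eq0 eqB rkM.
have wM : (x *m M <= M)%MS := submxMl x M.
have /sub_rVP[t Bt] := submx_trans BM (rank1_sub_rV rkM wM w0).
have t0 : t != 0 by apply: contraNneq B0 => t0; rewrite Bt t0 scale0r.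
by rewrite det_mx11 mxE row_id Bt starZ sgz_sqrM // (starE (erefl _) wM).
Qed.

Lemma sgn_det_star_unit : \det M != 0 -> sgn_det_star A = sgz (\det M).
Proof.
move=> D0; have rkM : \rank M = 2%N by rewrite mxrank_unit // unitmxE unitfE.
rewrite /sgn_det_star /star_gram.
move: (row_base M) (eq_row_base M) (row_base_free M); rewrite rkM => B eqB freeB.
set X := B *m pinvmx M; have XM : X *m M = B by apply: mulmxKpV; rewrite eqB.
have X0 : \det X != 0.
  apply: contraTneq freeB => X0.
  by rewrite row_free_unit unitmxE unitfE -XM det_mulmx X0 mul0r eqxx.
have gramE i j : star A (row i B) (row j B) = omega (row i X) (row j B).
  by rewrite (starE (x := row i X)) -?row_mul ?XM // (submx_trans (row_sub j B)) ?eqB.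
(* With B = X M, the Gram matrix is X J (X M)^T, of determinant (det X)^2 det M. *)
rewrite -[RHS](sgz_sqrM _ X0); congr sgz; clearbody X.
under eq_mx do rewrite gramE.
by rewrite !det_mx22 /omega !mxE -XM !mulmx2E !mxE; ring.
Qed.

Lemma stable_singular_a1 : \det M = 0 -> b = 0 -> a = 1.
Proof.
by move=> D0 b0; apply/eqP; rewrite -subr_eq0 -sqrf_eq0 -oppr_eq0 -det_fm1_stable // D0 mul0r.
Qed.

Lemma sgz_det_fm1_stable : \det M != 0 -> b = 0 -> sgz (\det M) = - sgz a.
Proof.
move=> D0 b0; have sq0 : (a - 1) ^+ 2 != 0.
  by rewrite -oppr_eq0 -det_fm1_stable // mulf_neq0 // stable_a_neq0.
have := congr1 (@sgz R) (det_fm1_stable b0).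
rewrite sgzM sgzN (@gtr0_sgz _ ((a - 1) ^+ 2)) ?lt_def ?sq0 ?sqr_ge0 //.
by case: (sgz_pm1 (stable_a_neq0 b0)) => ->;
  rewrite ?mulr1 ?mulrN1 ?opprK // => /oppr_inj.
Qed.

Lemma n_of_unit : \det M != 0 -> n_of A = sgz b * sgz (\det M) - 1 - sgz (\det M).
Proof.
(* [x] is p M^-1, read off the adjugate of M. *)
move=> D0; pose x : 'rV[R]_2 := (\det M)^-1 *: \row_j (if j == 0 then d - 1 else - b).
have DE : \det M = (a - 1) * (d - 1) - b * c by rewrite det_mx22 !fm1E /=; ring.
have xp : x *m M = p.
  apply/rowP => j; move: D0; rewrite mulmx2E !mxE DE.
  by case: (ord2P j) => -> /= D0; field.
rewrite /n_of (signature_lambda0 xp) mxrank_unit ?unitmxE ?unitfE //.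
rewrite (sgn_det_star_unit D0) /omega !mxE /= (_ : _ - _ = b * (\det M)^-1); last by ring.
by rewrite sgzM sgzV; ring.
Qed.

Lemma n_of_stable_singular : \det M = 0 -> b = 0 -> n_of A = 0.
Proof.
move=> D0 b0; have a1 := stable_singular_a1 D0 b0.
have d1 : d = 1 by have := det_symplectic; rewrite a1 b0 mul1r mul0r subr0.
have [M0|M0] := eqVneq M 0.
  rewrite /n_of signature_rank0; last by rewrite M0 capmx0 mxrank0.
  by rewrite (sgn_det_star_id M0) M0 mxrank0; lia.
have c0 : c != 0.
  apply: contraNneq M0 => c0; apply/eqP/matrixP => i j; rewrite fm1E mxE.
  by case: (ord2P i) => ->; case: (ord2P j) => -> /=; rewrite ?a1 ?b0 ?c0 ?d1 subrr.
pose x := c^-1 *: q.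
have xp : x *m M = p.
  by apply/rowP => j; rewrite mulmx2E !mxE; case: (ord2P j) => -> /=; rewrite ?d1; field.
have rkM := mxrank2_singular D0 M0.
rewrite /n_of (signature_lambda0 xp) rkM (sgn_det_star_rank1 (x := x) rkM) xp ?vp_neq0 //.
lia.
Qed.

Lemma n_of_transverse_singular : \det M = 0 -> b != 0 -> n_of A = - sgz b.
Proof.
move=> D0 b0; have M0 : M != 0.
  by apply: contraNneq b0 => /matrixP /(_ 0 1); rewrite fm1E mxE /= subr0 => ->.
have rkM := mxrank2_singular D0 M0.
have pM : ~~ (p <= M)%MS.
  apply: contra b0 => /(rank1_sub_rV rkM)/(_ vp_neq0) Mp.
  have /sub_rVP[t rowp] := submx_trans (row_sub 0 M) Mp.
  by have := congr1 (fun u : 'rV[R]_2 => u 0 1) rowp; rewrite !mxE /= mulr0 subr0 => ->.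
have pM0 : p *m M != 0.
  apply: contraNneq b0 => /rowP /(_ 1).
  by rewrite mulmx2E !vpE /= mul1r mul0r addr0 fm1E mxE /= subr0 => ->.
rewrite /n_of (signature_lambda0_eq0 pM) rkM (sgn_det_star_rank1 rkM pM0).
rewrite /omega mulmx2E !vpE /= mul1r mul0r addr0 mul0r subr0 mul1r fm1E /= subr0.
by lia.
Qed.

End Symplectic.

Theorem proposition3p3 (R : realType) (A : 'M[R]_2) :
  symplectic A -> s_of A = 'i ^ (- n_of A).
Proof.
move=> sympA; rewrite (s_ofE sympA); apply: expCi_eqmod4.
have [D0|D0] := eqVneq (\det (fm1 A)) 0; have [b0|b0] := eqVneq (A 0 1) 0 => /=.
- by rewrite (n_of_stable_singular sympA D0 b0) (stable_singular_a1 sympA D0 b0) sgz1.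
- by rewrite (n_of_transverse_singular sympA D0 b0) opprK.
- by rewrite (n_of_unit sympA D0) (sgz_det_fm1_stable sympA D0 b0) b0 sgz0; lia.
- rewrite (n_of_unit sympA D0).
  by case: (sgz_pm1 b0) => ->; case: (sgz_pm1 D0) => ->; lia.
Qed.
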